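(* For every $U\in\mathcal U_n$, the word $q(U)$ produced by the algorithm below is the area sequence of a Dyck path of length $n$, i.e. $q(U)=(a_1,\dots,a_n)$ with $a_1=0$ and $a_i\le a_{i-1}+1$ for $2\le i\le n$.
   Context: A unit interval order on $\{1,\dots,n\}$ is a relation $\prec$ such that there are closed intervals $I_1,\dots,I_n$ of length $1$ in $\mathbb R$, numbered from left to right, with $i\prec j$ iff $I_i$ lies strictly to the left of $I_j$; $\mathcal U_n$ is the set of these. Levels: set $\ell(1)=0$ and, for $j\ge 2$, $\ell(j)=\max_{i\prec j}\ell(i)+1$, with $\ell(j)=0$ if no $i\prec j$. Algorithm: define words $q_1,\dots,q_n$, $q_i$ of length $i$, with $q_1=(0)$. Given $q_{i-1}$, let $C_i$ be the number of elements $k$ with $k\prec i$ and $\ell(k)=\ell(i)-1$. Then $q_i$ is obtained from $q_{i-1}$ by inserting a letter $\ell(i)$ directly after the (possibly empty) run of letters $\ell(i)$ that immediately follows the $C_i$-th occurrence of the letter $\ell(i)-1$ in $q_{i-1}$ (when $C_i=0$, the ''0-th occurrence'' is understood as the start of the word). Set $q(U)=q_n$. The area sequence of a Dyck path lists, row by row from bottom to top, the number of full unit boxes between the path and the diagonal; these are exactly the sequences described in the claim. *)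

From Stdlib Require Import Reals.
From mathcomp Require Import all_boot.
Set Implicit Arguments. Unset Strict Implicit. Unset Printing Implicit Defensive.

(* prec : rel nat is a unit interval order on {1,...,n}: there are closed unit
   intervals I_i = [x i, x i + 1], numbered from left to right (left endpoints
   nondecreasing), such that for i, j in {1..n}, i prec j iff I_i lies strictly
   to the left of I_j, i.e. x i + 1 < x j. *)
Definition is_unit_interval_order (n : nat) (prec : rel nat) : Prop :=
  exists x : nat -> R,
    (forall i, 1 <= i -> i < n -> Rle (x i) (x i.+1)) /\
    (forall i j, 1 <= i <= n -> 1 <= j <= n ->
       (prec i j <-> Rlt (Rplus (x i) R1) (x j))).

(* levs prec k = [:: l(1); ...; l(k)], with
   l(j) = max_{i prec j} l(i) + 1, and l(j) = 0 if no i prec j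
   (the predecessors of j are among 1..j-1). *)
Fixpoint levs (prec : rel nat) (k : nat) : seq nat :=
  match k with
  | 0 => [::]
  | k'.+1 =>
      let L := levs prec k' in
      rcons L (foldr maxn 0
                 [seq (nth 0 L i.-1).+1 | i <- iota 1 k' & prec i k'.+1])
  end.

Definition level (prec : rel nat) (j : nat) : nat := nth 0 (levs prec j) j.-1.

(* C_i = #{ k : k prec i, l(k) = l(i) - 1 } (k ranges over 1..i-1). When
   l(i) = 0 there is no k prec i, so C_i = 0. *)
Definition Ccount (prec : rel nat) (i : nat) : nat :=
  count (fun k => prec k i && (level prec k == (level prec i).-1)) (iota 1 i.-1).

(* Index (0-based) just after the c-th occurrence of letter b in w;
   0 when c = 0 (start of the word). *)
Fixpoint after_occ (b c : nat) (w : seq nat) : nat :=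
  match w with
  | [::] => 0
  | x :: w' =>
      if c is 0 then 0
      else if x == b then (if c == 1 then 1 else (after_occ b c.-1 w').+1)
      else (after_occ b c w').+1
  end.

(* Insert letter a directly after the (possibly empty) run of letters a that
   immediately follows the c-th occurrence of a - 1 in w. *)
Definition insert_step (w : seq nat) (a c : nat) : seq nat :=
  let p0 := after_occ a.-1 c w in
  let p := p0 + find (fun y => y != a) (drop p0 w) in
  take p w ++ a :: drop p w.

Fixpoint qword (prec : rel nat) (i : nat) : seq nat :=
  match i with
  | 0 => [::]
  | 1 => [:: 0]
  | i'.+1 => insert_step (qword prec i') (level prec i) (Ccount prec i)
  end.

Definition qU (n : nat) (prec : rel nat) : seq nat := qword prec n.

From Stdlib Require Import Reals.
From mathcomp Require Import all_boot.
From mathcomp Require Import zify.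

Set Implicit Arguments.
Unset Strict Implicit.
Unset Printing Implicit Defensive.

(* The letter [a = l(i)] is always inserted right after a letter equal to
   [a - 1] or to [a]: an occurrence of [a - 1] is available because [l(i) > 0]
   forces a predecessor of [i] of level [l(i) - 1], so [C_i > 0], while [C_i]
   is at most the number of letters [a - 1] of [q_{i-1}], which are the levels
   of [1, ..., i - 1].  Inserting [a] after such a letter [x] keeps every step
   [y <= x + 1] valid on both sides, so each [q_i] stays an area sequence. *)

Definition area_step : rel nat := fun x y => y <= x.+1.

Definition area_sequence (w : seq nat) : bool :=
  (head 1 w == 0) && path area_step 0 w.

Lemma area_sequenceP w : area_sequence w ->
  [/\ 0 < size w, nth 0 w 0 = 0 &
      forall i, 0 < i < size w -> nth 0 w i <= (nth 0 w i.-1).+1].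
Proof.
case: w => [|x w] //; rewrite /area_sequence /= => /andP[/eqP-> path_w].
split=> // [[|i]] // /andP[_ hi].
by move/pathP: path_w => /(_ 0 i hi).
Qed.

Lemma area_sequence_insert w p a :
  area_sequence w -> 0 < p <= size w ->
  nth 0 w p.-1 <= a <= (nth 0 w p.-1).+1 ->
  area_sequence (take p w ++ a :: drop p w).
Proof.
move=> /andP[head_w path_w] /andP[p_gt0 p_le] /andP[le_xa le_ax].
apply/andP; split.
  by case: w p p_gt0 {p_le le_xa le_ax} head_w path_w => [|x w] [|p].
have size_take_p : size (take p w) = p by rewrite size_take_min; apply/minn_idPl.
have last_take_p : last 0 (take p w) = nth 0 w p.-1.
  by rewrite -nth_last size_take_p nth_take // ltn_predL.
move: path_w; rewrite -{1}(cat_take_drop p w) !cat_path last_take_p /=.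
case/andP=> ->; case: (drop p w) => [|y v] /=; first by rewrite /area_step le_ax.
by case/andP; rewrite /area_step le_ax => le_yx ->; rewrite andbT; lia.
Qed.

Lemma after_occ0 b w : after_occ b 0 w = 0.
Proof. by case: w. Qed.

Lemma after_occP b c w : 0 < c <= count (pred1 b) w ->
  [/\ 0 < after_occ b c w, after_occ b c w <= size w
    & nth 0 w (after_occ b c w).-1 = b].
Proof.
elim: w c => [|x w IH] [|c] //= hc.
case: eqP hc => [xb|_]; rewrite ?add1n ?add0n => hc.
  case: c hc => [|c] hc /=; first by rewrite xb.
  by have [] := IH c.+1 hc; case: (after_occ b c.+1 w).
by have [] := IH c.+1 hc; case: (after_occ b c.+1 w).
Qed.

Lemma nth_pred_find_neq (a : nat) s :
  0 < find (fun y => y != a) s -> nth 0 s (find (fun y => y != a) s).-1 = a.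
Proof.
case E: find => [|f] // _; apply/eqP/negbFE.
by have := @before_find _ 0 (fun y => y != a) s f; rewrite E ltnSn; apply.
Qed.

Definition insert_pos (w : seq nat) (a c : nat) : nat :=
  after_occ a.-1 c w + find (fun y => y != a) (drop (after_occ a.-1 c w) w).

Lemma insert_stepE w a c :
  insert_step w a c = take (insert_pos w a c) w ++ a :: drop (insert_pos w a c) w.
Proof. by []. Qed.

(* For [c = 0] the position is positive because [w] starts with [0 = a]. *)
Lemma insert_posP w a c :
  area_sequence w -> c <= count (pred1 a.-1) w -> (c == 0) ==> (a == 0) ->
  let p := insert_pos w a c in
  [/\ 0 < p, p <= size w & nth 0 w p.-1 \in [:: a.-1; a]].
Proof.
move=> /area_sequenceP[w_gt0 w0 _] c_le a0 /=; rewrite /insert_pos.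
case: (posnP c) c_le a0 => [-> _ /eqP a_eq0 | c_gt0 c_le _].
  rewrite after_occ0 add0n drop0.
  have find_gt0 : 0 < find (fun y => y != a) w.
    by case: w w_gt0 w0 => [|x w] //= _ ->; rewrite a_eq0.
  by split; rewrite ?find_size ?nth_pred_find_neq // !inE eqxx orbT.
have /after_occP[p0_gt0 p0_le nth_p0] : 0 < c <= count (pred1 a.-1) w.
  by rewrite c_gt0.
set p0 := after_occ _ _ _ in p0_gt0 p0_le nth_p0 *.
set f := find _ (drop p0 w).
have f_le : f <= size w - p0 by rewrite -size_drop find_size.
case: (posnP f) => [-> | f_gt0].
  by rewrite addn0 nth_p0 inE eqxx.
split; [lia | lia |].
by rewrite -(prednK f_gt0) addnS -nth_drop nth_pred_find_neq // !inE eqxx orbT.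
Qed.

Lemma area_sequence_insert_step w a c :
  area_sequence w -> c <= count (pred1 a.-1) w -> (c == 0) ==> (a == 0) ->
  area_sequence (insert_step w a c).
Proof.
move=> w_area c_le a0; have [p_gt0 p_le nth_p] := insert_posP w_area c_le a0.
rewrite insert_stepE area_sequence_insert // ?p_gt0 //.
by move: nth_p; rewrite !inE => /orP[] /eqP->; lia.
Qed.

Lemma size_insert_step w a c : size (insert_step w a c) = (size w).+1.
Proof. by rewrite insert_stepE size_cat /= addnS -size_cat cat_take_drop. Qed.

Lemma count_insert_step (P : pred nat) w a c :
  count P (insert_step w a c) = P a + count P w.
Proof. by rewrite insert_stepE count_cat /= addnCA -count_cat cat_take_drop. Qed.

Lemma foldr_maxn_mem (s : seq nat) : 0 < foldr maxn 0 s -> foldr maxn 0 s \in s.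
Proof.
elim: s => //= x s IH; case: (leqP x (foldr maxn 0 s)) => [le_xm m_gt0|].
  by rewrite inE IH ?orbT.
by rewrite inE eqxx.
Qed.

Section Qword.

Variable prec : rel nat.

Lemma size_levs k : size (levs prec k) = k.
Proof. by elim: k => //= k IH; rewrite size_rcons IH. Qed.

Lemma levs_level k : levs prec k = map (level prec) (iota 1 k).
Proof.
elim: k => // k IH.
rewrite -addn1 iotaD map_cat cats1 add1n -IH addn1 /= /level /=.
by rewrite nth_rcons size_levs ltnn eqxx.
Qed.

Lemma levelS k : level prec k.+1 =
  foldr maxn 0 [seq (level prec i).+1 | i <- iota 1 k & prec i k.+1].
Proof.
rewrite {1}/level /= nth_rcons size_levs ltnn eqxx levs_level.
congr (foldr maxn 0 _); apply/eq_in_map => i.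
rewrite mem_filter mem_iota => /andP[_ /andP[i_gt0 i_lt]].
by rewrite (nth_map 0) ?size_iota ?nth_iota ?add1n ?prednK //; lia.
Qed.

Lemma Ccount_gt0 i : 0 < level prec i -> 0 < Ccount prec i.
Proof.
case: i => [|i] //; rewrite /Ccount -has_count levelS => /foldr_maxn_mem.
case/mapP=> j; rewrite mem_filter => /andP[prec_j j_in] ->.
by apply/hasP; exists j; rewrite //= prec_j eqxx.
Qed.

Lemma Ccount_le i :
  Ccount prec i <= count (fun k => level prec k == (level prec i).-1) (iota 1 i.-1).
Proof. by apply: sub_count => k /andP[]. Qed.

Lemma qwordSS i : qword prec i.+2 =
  insert_step (qword prec i.+1) (level prec i.+2) (Ccount prec i.+2).
Proof. by []. Qed.

Lemma size_qword i : size (qword prec i) = i.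
Proof. by elim: i => [|[|i] IH] //; rewrite qwordSS size_insert_step IH. Qed.

Lemma count_qword i b :
  count (pred1 b) (qword prec i) = count (fun k => level prec k == b) (iota 1 i).
Proof.
elim: i => [|[|i] IH] //.
by rewrite qwordSS count_insert_step IH -addn1 iotaD count_cat /= addn0 addn1 add1n addnC.
Qed.

Lemma area_sequence_qword i : 0 < i -> area_sequence (qword prec i).
Proof.
case: i => [|i] // _; elim: i => [|i IH] //.
rewrite qwordSS; apply: area_sequence_insert_step => //.
  by rewrite count_qword; apply: Ccount_le.
have [_ | /Ccount_gt0 c_gt0] := posnP (level prec i.+2); first exact: implybT.
by rewrite eqn0Ngt c_gt0.
Qed.

End Qword.

Theorem mainTheorem4 (n : nat) (prec : rel nat) :
  1 <= n -> is_unit_interval_order n prec ->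
  let q := qU n prec in
  [/\ size q = n,
      nth 0 q 0 = 0 &
      forall i, 1 <= i < n -> nth 0 q i <= (nth 0 q i.-1).+1].
Proof.
move=> n_gt0 _ /=; rewrite /qU.
have := area_sequenceP (area_sequence_qword prec n_gt0).
by rewrite size_qword => -[_ q0 q_step]; split.
Qed.
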